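(* Let $S$ be a set, $x\in\mathbb{R}$, $b\neq 0$, and let $f:\mathbb{R}\to S$ be a scenario that is past-periodic on $(-\infty,x)$ with period $b$. If $f$ is periodic, then $b$ is a period of $f$, i.e. $f(y)=f(y+b)$ for all $y\in\mathbb{R}$.
   Context: A scenario is a function $f:\mathbb{R}\to S$. For $b\in\mathbb{R}$, $t^b(y)=y+b$. A scenario $f$ is periodic if there is $c\neq 0$ with $f=f\circ t^c$ ($c$ is then a period of $f$). $f$ is past-periodic on $(-\infty,x)$ with period $b$ if $b\ne 0$ and $f\upharpoonright(-\infty,x)=(f\circ t^b)\upharpoonright(-\infty,x)$. *)

From Stdlib Require Import Reals.
Open Scope R_scope.

Definition t (b : R) : R -> R := fun y => y + b.

Definition is_period {S : Type} (f : R -> S) (c : R) : Prop :=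
  c <> 0 /\ f = (fun y => f (t c y)).

Definition periodic {S : Type} (f : R -> S) : Prop :=
  exists c : R, is_period f c.

Definition past_periodic {S : Type} (f : R -> S) (x b : R) : Prop :=
  b <> 0 /\ forall y : R, y < x -> f y = f (t b y).

(* Shifting y by a multiple n c of a negative period c of f moves it into (-oo, x)
   without changing f; there f agrees with f o t^b, and shifting back by n c
   gives f y = f (y + b). *)
From Stdlib Require Import Reals Lra.
Open Scope R_scope.

Section Periods.

Variables (S : Type) (f : R -> S).

Definition shift_invariant (c : R) : Prop := forall z, f z = f (z + c).

Lemma is_period_shift_invariant (c : R) : is_period f c -> shift_invariant c.
Proof. intros [_ Hf] z; exact (f_equal (fun g => g z) Hf). Qed.

Lemma shift_invariant_opp (c : R) : shift_invariant c -> shift_invariant (- c).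
Proof. intros Hc z; rewrite (Hc (z + - c)); f_equal; ring. Qed.

Lemma shift_invariant_mul_nat (c : R) (n : nat) :
  shift_invariant c -> shift_invariant (INR n * c).
Proof.
  intros Hc; induction n as [|n IH]; intros z.
  - f_equal; simpl; ring.
  - rewrite S_INR, IH, Hc; f_equal; ring.
Qed.

Lemma periodic_neg_shift_invariant :
  periodic f -> exists c, c < 0 /\ shift_invariant c.
Proof.
  intros [c Hper]; pose proof (is_period_shift_invariant c Hper) as Hc.
  destruct Hper as [Hc0 _].
  destruct (Rlt_or_le c 0) as [Hneg | Hpos].
  - now exists c.
  - exists (- c); split; [lra | exact (shift_invariant_opp c Hc)].
Qed.

End Periods.

Lemma nat_mul_neg_below (c y x : R) :
  c < 0 -> exists n : nat, y + INR n * c < x.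
Proof.
  intros Hc.
  destruct (INR_unbounded ((y - x) / - c)) as [n Hn].
  exists n.
  assert (Hlt : y - x < INR n * - c).
  { apply (Rmult_lt_compat_r (- c)) in Hn; [| lra].
    unfold Rdiv in Hn; rewrite Rmult_assoc, Rinv_l in Hn by lra; lra. }
  lra.
Qed.

Theorem lemma3 (S : Type) (x b : R) (f : R -> S) :
  b <> 0 -> past_periodic f x b -> periodic f ->
  forall y : R, f y = f (y + b).
Proof.
  intros _ [_ Hpast] Hper y.
  destruct (periodic_neg_shift_invariant S f Hper) as [c [Hc Hinv]].
  destruct (nat_mul_neg_below c y x Hc) as [n Hn].
  pose proof (shift_invariant_mul_nat S f c n Hinv) as Hnc.
  rewrite (Hnc y), (Hnc (y + b)), (Hpast _ Hn).
  unfold t; f_equal; ring.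
Qed.
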